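(* Consider 2-Choices. For any opinion $i$ and any $t\ge1$, on the event $\alpha_{t-1}(i)\le\gamma_{t-1}$, the random variable $\alpha_t(i)-\alpha_{t-1}(i)$ conditioned on $\mathcal F_{t-1}$ satisfies the one-sided $\big(\frac1n,\frac{2\alpha_{t-1}(i)^2}{n}\big)$-Bernstein condition.
   Context: **Setting.** Let $V$ be a set of $n$ vertices and $k\in\{1,\dots,n\}$. A configuration is a map $\mathsf{opn}\colon V\to[k]$. **2-Choices.** This is a synchronous process. In each round $t\ge1$, each vertex $v$ independently samples $w_1,w_2\in V$ uniformly with replacement. It sets $\mathsf{opn}_t(v)=\mathsf{opn}_{t-1}(w_1)$ if $\mathsf{opn}_{t-1}(w_1)=\mathsf{opn}_{t-1}(w_2)$, and $\mathsf{opn}_t(v)=\mathsf{opn}_{t-1}(v)$ otherwise. **Basic quantities.** - $\alpha_t(i)=|\{v:\mathsf{opn}_t(v)=i\}|/n$. - $\gamma_t=\sum_i\alpha_t(i)^2$. - $\mathcal F_t$ is generated by $\mathsf{opn}_0,\dots,\mathsf{opn}_t$. **One-sided Bernstein condition.** $X$ satisfies the one-sided $(D,s)$-Bernstein condition if $\mathbb E[e^{\lambda X}]\le\exp\big(\frac{\lambda^2 s/2}{1-\lambda D/3}\big)$ for all $\lambda\ge0$ with $\lambda D<3$. Conditioned on $\mathcal F_{t-1}$, the expectation is replaced by the conditional expectation. *)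

From HB Require Import structures.
From mathcomp Require Import all_boot all_order all_algebra.
From mathcomp Require Import reals.
From mathcomp Require Import sequences exp.
Set Implicit Arguments. Unset Strict Implicit. Unset Printing Implicit Defensive.
Import Order.TTheory GRing.Theory Num.Theory.
Local Open Scope ring_scope.

Definition config (V : finType) (k : nat) := {ffun V -> 'I_k}.

Definition alpha (R : realType) (V : finType) (k : nat) (c : config V k) (i : 'I_k) : R :=
  #|[set v | c v == i]|%:R / #|V|%:R.

Definition gamma (R : realType) (V : finType) (k : nat) (c : config V k) : R :=
  \sum_(j < k) alpha R c j ^+ 2.

Definition two_choices_step (V : finType) (k : nat) (c : config V k)
  (s : {ffun V -> V * V}) : config V k :=
  [ffun v => if c (s v).1 == c (s v).2 then c (s v).1 else c v].

(* Expectation of f(opn_t) conditioned on F_{t-1}, where opn_{t-1} = c: every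
   vertex independently samples (w1,w2) uniformly from V*V, i.e. the sample
   function s : V -> V*V is uniform over all such functions. *)
Definition cond_exp_step (R : realType) (V : finType) (k : nat) (c : config V k)
  (f : config V k -> R) : R :=
  (\sum_(s : {ffun V -> V * V}) f (two_choices_step c s)) / #|{ffun V -> V * V}|%:R.

Definition one_sided_Bernstein (R : realType) (mgf : R -> R) (D s : R) : Prop :=
  forall lam : R, 0 <= lam -> lam * D < 3 ->
    mgf lam <= expR ((lam ^+ 2 * s / 2) / (1 - lam * D / 3)).

Definition cond_mgf_increment (R : realType) (V : finType) (k : nat)
  (c : config V k) (i : 'I_k) (lam : R) : R :=
  cond_exp_step c (fun c' => expR (lam * (alpha R c' i - alpha R c i))).

(* Given opn_{t-1} = c, the vertices sample independently, so the conditional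
   mgf of the increment factors over vertices into mgfs of (lam/n)-scaled
   increments in {-1, 0, 1}.  A vertex holding i leaves it when its two samples
   agree on another opinion (probability gamma - alpha^2); any other vertex adopts
   i when both samples hold i (probability alpha^2).  With m = lam/n and
   1 + x <= e^x, the log-mgf is at most
     n (alpha (gamma - alpha^2) (e^-m - 1) + (1 - alpha) alpha^2 (e^m - 1)),
   and since e^-m - 1 <= 0, the event alpha <= gamma lets us replace gamma by
   alpha, giving at most n alpha^2 (e^m + e^-m - 2) <= n alpha^2 m^2 / (1 - m/3). *)
From HB Require Import structures.
From mathcomp Require Import all_boot all_order all_algebra.
From mathcomp Require Import reals.
From mathcomp Require Import sequences exp.
From mathcomp Require Import topology normedtype.
From mathcomp Require Import ring lra.
Import numFieldNormedType.Exports.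
Set Implicit Arguments. Unset Strict Implicit. Unset Printing Implicit Defensive.
Import Order.TTheory GRing.Theory Num.Theory.
Local Open Scope ring_scope.

Lemma factSS_ge_expn3 (j : nat) : (2 * 3 ^ j <= (j.+2)`!)%N.
Proof.
elim: j => [|j IH]; first by [].
by rewrite factS expnS mulnCA; apply: leq_mul.
Qed.

Lemma geometric_sum_le (R : realFieldType) (r : R) (N : nat) : 0 <= r < 1 ->
  \sum_(j < N) r ^+ j <= (1 - r)^-1.
Proof.
move=> /andP[r0 r1]; have h : 0 < 1 - r by rewrite subr_gt0.
elim: N => [|N IH]; first by rewrite big_ord0 invr_ge0 ltW.
rewrite big_ord_recl expr0.
under eq_bigr do rewrite exprS.
rewrite -mulr_sumr.
apply: (@le_trans _ _ (1 + r * (1 - r)^-1)); first by rewrite lerD2l ler_wpM2l.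
by rewrite -[X in X + _ <= _](divff (lt0r_neq0 h)) -mulrDl subrK mul1r.
Qed.

(* Since (j+2)! >= 2 3^j, the even part of the exponential series is dominated
   by a geometric series of ratio m/3. *)
Lemma exp_coeff_pair_le (R : realType) (m : R) (j : nat) : 0 <= m ->
  exp_coeff m j.+2 + exp_coeff (- m) j.+2 <= m ^+ 2 * (m / 3) ^+ j.
Proof.
move=> m0; rewrite /exp_coeff /= -mulrDl.
have hn : (- m) ^+ j.+2 <= m ^+ j.+2.
  by apply: (le_trans (ler_norm _)); rewrite normrX normrN ger0_norm.
apply: (@le_trans _ _ ((m ^+ j.+2 + m ^+ j.+2) / (j.+2)`!%:R)).
  by apply: ler_wpM2r; [rewrite invr_ge0 ler0n | rewrite lerD2l].
have -> : m ^+ j.+2 = m ^+ 2 * m ^+ j by rewrite -exprD.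
rewrite -mulrDr -mulrA ler_wpM2l ?exprn_ge0 // exprMn exprVn.
have -> : m ^+ j + m ^+ j = m ^+ j * 2 by rewrite mulr_natr mulr2n.
rewrite -mulrA ler_wpM2l ?exprn_ge0 //.
rewrite ler_pdivrMr ?ltr0n ?fact_gt0 // mulrC ler_pdivlMr ?exprn_gt0 //.
by rewrite -natrX -natrM ler_nat factSS_ge_expn3.
Qed.

Lemma expR_add_expRN_le (R : realType) (m : R) : 0 <= m -> m < 3 ->
  expR m + expR (- m) - 2 <= m ^+ 2 / (1 - m / 3).
Proof.
move=> m0 m3.
have r01 : 0 <= m / 3 < 1 by rewrite divr_ge0 //= ltr_pdivrMr //; lra.
have bound_ge0 : 0 <= m ^+ 2 / (1 - m / 3).
  by rewrite divr_ge0 ?exprn_ge0 // subr_ge0 ltW //; case/andP: r01.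
have partial_le N : series (exp_coeff m) N + series (exp_coeff (- m)) N
                    <= 2 + m ^+ 2 / (1 - m / 3).
  case: N => [|[|j]].
  - by rewrite /series /= !big_geq // addr0 addr_ge0.
  - rewrite /series /= !big_nat1 /exp_coeff /= !expr0 !divr1.
    by rewrite -[X in X <= _]addr0 lerD2l.
  - rewrite /series /= -big_split /= !big_nat_recl //.
    have tail_le : \sum_(0 <= l < j) (exp_coeff m l.+2 + exp_coeff (- m) l.+2)
                   <= m ^+ 2 / (1 - m / 3).
      apply: (le_trans (ler_sum _ (fun l _ => exp_coeff_pair_le l m0))).
      by rewrite -mulr_sumr big_mkord ler_wpM2l ?exprn_ge0 // geometric_sum_le.
    move: tail_le; rewrite /exp_coeff /= factS !fact0 muln1 !divr1 !expr0 !expr1.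
    lra.
have cvg_m := is_cvg_series_exp_coeff m.
have cvg_Nm := is_cvg_series_exp_coeff (- m).
rewrite /expR -(limD cvg_m cvg_Nm) lerBlDl addrC.
apply: limr_le; first exact: is_cvgD.
by near=> N; rewrite addrC; apply: partial_le.
Unshelve. all: by end_near.
Qed.

Lemma increment_exponent_le (R : realFieldType) (a g K1 K2 : R) :
  0 <= a <= 1 -> a <= g -> K1 <= 0 -> 0 <= K1 + K2 ->
  a * ((g - a ^+ 2) * K1) + (1 - a) * (a ^+ 2 * K2) <= a ^+ 2 * (K1 + K2).
Proof.
move=> /andP[a_ge0 a_le1] a_le_g K1_le0 K12_ge0.
have h1 : a * (g - a) * K1 <= 0.
  by apply: mulr_ge0_le0 => //; apply: mulr_ge0 => //; rewrite subr_ge0.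
have h2 : 0 <= a ^+ 3 * (K1 + K2) by apply: mulr_ge0; rewrite ?exprn_ge0.
have -> : a * ((g - a ^+ 2) * K1) + (1 - a) * (a ^+ 2 * K2) =
    a * (g - a) * K1 + a ^+ 2 * (K1 + K2) - a ^+ 3 * (K1 + K2) by ring.
lra.
Qed.

Lemma mean_ffun_prod (R : fieldType) (I J : finType) (F : I -> J -> R) :
  (\sum_(s : {ffun I -> J}) \prod_x F x (s x)) / #|{ffun I -> J}|%:R =
  \prod_x ((\sum_y F x y) / #|J|%:R).
Proof.
rewrite prodf_div -bigA_distr_bigA; congr (_ / _).
by rewrite card_ffun natrX -prodr_const; apply: eq_bigl.
Qed.

Section TwoChoicesRound.
Variables (R : realType) (V : finType) (k : nat) (c : config V k) (i : 'I_k).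

Local Notation n := (#|V|%:R : R).

Definition two_choices_update (v : V) (w : V * V) : 'I_k :=
  if c w.1 == c w.2 then c w.1 else c v.

Definition both_samples_in (w : V * V) : bool := (c w.1 == i) && (c w.2 == i).

Definition samples_agree_off (w : V * V) : bool := (c w.1 == c w.2) && (c w.1 != i).

Lemma alphaE (j : 'I_k) (c' : config V k) :
  alpha R c' j = (\sum_v ((c' v == j)%:R : R)) / n.
Proof.
rewrite /alpha; congr (_ / _).
rewrite -sum1_card natr_sum big_mkcond /=; apply: eq_bigr => v _.
by rewrite inE; case: (c' v == j).
Qed.

Lemma card_pairsE : (#|{: V * V}|%:R : R) = n ^+ 2.
Proof. by rewrite card_prod natrM expr2. Qed.

Lemma sum_samples_agreeE (P : 'I_k -> bool) :
  \sum_(w : V * V) (((c w.1 == c w.2) && P (c w.1))%:R : R) =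
  \sum_(j | P j) (\sum_v ((c v == j)%:R : R)) ^+ 2.
Proof.
have -> : \sum_(w : V * V) (((c w.1 == c w.2) && P (c w.1))%:R : R) =
    \sum_a \sum_b (((c a == c b) && P (c a))%:R : R) by rewrite pair_bigA.
transitivity (\sum_(j | P j) \sum_a \sum_b ((c a == j)%:R * (c b == j)%:R : R)).
  rewrite [RHS]exchange_big; apply: eq_bigr => a _.
  rewrite [RHS]exchange_big; apply: eq_bigr => b _.
  rewrite big_mkcond (bigD1 (c a)) //= eqxx mul1r big1 ?addr0.
    by rewrite eq_sym; case: (P (c a)); rewrite ?andbT ?andbF.
  by move=> j /negbTE hj; rewrite eq_sym hj mul0r if_same.
by apply: eq_bigr => j _; rewrite expr2 big_distrlr.
Qed.

Lemma mean_samples_agree_in (P : 'I_k -> bool) :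
  (\sum_(w : V * V) (((c w.1 == c w.2) && P (c w.1))%:R : R)) / #|{: V * V}|%:R =
  \sum_(j | P j) alpha R c j ^+ 2.
Proof.
rewrite sum_samples_agreeE card_pairsE mulr_suml.
by apply: eq_bigr => j _; rewrite alphaE expr_div_n.
Qed.

Lemma mean_both_samples_in :
  (\sum_w ((both_samples_in w)%:R : R)) / #|{: V * V}|%:R = alpha R c i ^+ 2.
Proof.
rewrite (eq_bigr (fun w => (((c w.1 == c w.2) && pred1 i (c w.1))%:R : R))).
  by rewrite mean_samples_agree_in big_pred1_eq.
move=> w _; rewrite /both_samples_in /=.
by case: (c w.1 =P i) => [->|_]; rewrite ?andbT ?andbF // eq_sym.
Qed.

Lemma mean_samples_agree_off :
  (\sum_w ((samples_agree_off w)%:R : R)) / #|{: V * V}|%:R =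
  gamma R c - alpha R c i ^+ 2.
Proof.
rewrite (eq_bigr (fun w => (((c w.1 == c w.2) && predC1 i (c w.1))%:R : R))) //.
by rewrite mean_samples_agree_in /gamma [in RHS](bigD1 i) //= addrC addrK.
Qed.

Lemma cond_mgf_increment_prod (lam : R) :
  cond_mgf_increment c i lam =
  \prod_v ((\sum_w expR (lam / n *
     ((two_choices_update v w == i)%:R - (c v == i)%:R))) / #|{: V * V}|%:R).
Proof.
rewrite /cond_mgf_increment /cond_exp_step -mean_ffun_prod.
congr (_ / _); apply: eq_bigr => s _.
rewrite !alphaE -mulrBl -sumrB mulrCA mulrC mulr_sumr expR_sum.
by apply: eq_bigr => v _; rewrite ffunE mulrAC.
Qed.

Lemma expR_increment (mu : R) (v : V) (w : V * V) :
  expR (mu * ((two_choices_update v w == i)%:R - (c v == i)%:R)) =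
  1 + if c v == i then (samples_agree_off w)%:R * (expR (- mu) - 1)
      else (both_samples_in w)%:R * (expR mu - 1).
Proof.
rewrite /two_choices_update /samples_agree_off /both_samples_in.
case hv: (c v == i); case h12: (c w.1 == c w.2) => /=.
- case h1: (c w.1 == i) => /=.
  + by rewrite subrr mulr0 expR0 mul0r addr0.
  + by rewrite sub0r mulrN1 mul1r addrC subrK.
- by rewrite hv subrr mulr0 expR0 mul0r addr0.
- rewrite -(eqP h12) andbb; case h1: (c w.1 == i) => /=.
  + by rewrite subr0 mulr1 mul1r addrC subrK.
  + by rewrite subrr mulr0 expR0 mul0r addr0.
- rewrite hv; case h1: (c w.1 == i); case h2: (c w.2 == i) => /=;
    try by rewrite subrr mulr0 expR0 mul0r addr0.
  by rewrite (eqP h1) (eqP h2) eqxx in h12.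
Qed.

Lemma mean_expR_increment (mu : R) (v : V) : (0 < #|V|)%N ->
  (\sum_w expR (mu * ((two_choices_update v w == i)%:R - (c v == i)%:R)))
    / #|{: V * V}|%:R =
  1 + if c v == i then (gamma R c - alpha R c i ^+ 2) * (expR (- mu) - 1)
      else alpha R c i ^+ 2 * (expR mu - 1).
Proof.
move=> V_gt0; have M_neq0 : (#|{: V * V}|%:R : R) != 0.
  by rewrite card_pairsE expf_neq0 // pnatr_eq0 -lt0n.
under eq_bigr do rewrite expR_increment.
rewrite big_split sumr_const mulrDl -mulr_natl mulr1 divff //.
case: (c v == i); rewrite -mulr_suml mulrAC.
- by rewrite mean_samples_agree_off.
- by rewrite mean_both_samples_in.
Qed.

Lemma alpha_ge0 : 0 <= alpha R c i.
Proof. by rewrite /alpha divr_ge0 ?ler0n. Qed.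

Lemma alpha_le1 : alpha R c i <= 1.
Proof.
rewrite /alpha; have [->|V_gt0] := posnP #|V|; first by rewrite invr0 mulr0 ler01.
by rewrite ler_pdivrMr ?ltr0n // mul1r ler_nat max_card.
Qed.

Lemma sum_if_opinion (A B : R) : (0 < #|V|)%N ->
  \sum_v (if c v == i then A else B) =
  n * (alpha R c i * A + (1 - alpha R c i) * B).
Proof.
move=> V_gt0; have n_alpha : n * alpha R c i = \sum_v ((c v == i)%:R : R).
  by rewrite alphaE mulrC divfK // pnatr_eq0 -lt0n.
transitivity (\sum_v ((c v == i)%:R * A + (1 - (c v == i)%:R) * B)).
  by apply: eq_bigr => v _; case: (c v == i); rewrite /=; ring.
rewrite big_split /= -!mulr_suml sumrB sumr_const.
by rewrite -n_alpha (_ : #|xpredT| = #|V|) //; ring.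
Qed.

End TwoChoicesRound.

Theorem lemma4p3 (R : realType) (V : finType) (k : nat)
  (hk1 : (1 <= k)%N) (hkn : (k <= #|V|)%N)
  (c : config V k) (i : 'I_k)
  (hev : alpha R c i <= gamma R c) :
  one_sided_Bernstein (cond_mgf_increment c i)
    (1 / #|V|%:R) (2 * alpha R c i ^+ 2 / #|V|%:R).
Proof.
move=> lam lam_ge0 lamD_lt3.
have V_gt0 : (0 < #|V|)%N by apply: leq_trans hkn.
have n_gt0 : (0 : R) < #|V|%:R by rewrite ltr0n.
set mu := lam / #|V|%:R.
have mu_ge0 : 0 <= mu by rewrite divr_ge0 // ltW.
have mu_lt3 : mu < 3 by move: lamD_lt3; rewrite mul1r.
rewrite cond_mgf_increment_prod.
apply: le_trans.
  apply: ler_prod => v _; apply/andP; split.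
    by rewrite divr_ge0 ?ler0n // sumr_ge0 // => w _; rewrite expR_ge0.
  by rewrite mean_expR_increment //; apply: expR_ge1Dx.
rewrite -expR_sum ler_expR sum_if_opinion //.
have bernstein_exponentE :
    lam ^+ 2 * (2 * alpha R c i ^+ 2 / #|V|%:R) / 2 / (1 - lam * (1 / #|V|%:R) / 3)
    = #|V|%:R * (alpha R c i ^+ 2 * (mu ^+ 2 / (1 - mu / 3))).
  rewrite /mu; field; rewrite (lt0r_neq0 n_gt0) /=.
  by apply: lt0r_neq0; rewrite subr_gt0 mulrC -ltr_pdivrMr.
rewrite bernstein_exponentE ler_pM2l // -/mu.
apply: (@le_trans _ _ (alpha R c i ^+ 2 * ((expR (- mu) - 1) + (expR mu - 1)))).
  apply: increment_exponent_le => //.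
  - by rewrite alpha_ge0 alpha_le1.
  - by rewrite subr_le0 expR_le1 oppr_le0.
  - by have := expR_ge1Dx mu; have := expR_ge1Dx (- mu); lra.
apply: ler_wpM2l; first by rewrite exprn_ge0 ?alpha_ge0.
by have := expR_add_expRN_le mu_ge0 mu_lt3; lra.
Qed.
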